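(* Let $X,Y\in su(2)\cong\mathbb R^3$ be unit vectors with angle $\alpha\in(0,\pi)$ between them. (a) If $s_1,s_2\in\mathbb R$ satisfy $\cos(\alpha)\tan(s_1)\tan(s_2)=1$, then $\varphi(\exp(s_1X)\exp(s_2Y))$ is a rotation by angle $\pi$, and $\exp(s_1X)\exp(s_2Y)=-\exp(-s_2Y)\exp(-s_1X)$. (b) Let $s_1,s_2,s_3\in\mathbb R$ with $\cos s_2\neq0$, and let $\psi\in(-\pi/2,\pi/2]$ satisfy $\tan\psi=\cos\alpha\tan s_2$. Then $\exp(s_1X)\exp(s_2Y)\exp(s_3X)=\exp(s_1'X)\exp(-s_2Y)\exp(s_3'X)$, where $s_1'=s_1+\psi-\frac{\pi}{2}$ and $s_3'=s_3+\psi+\frac{\pi}{2}$.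
   Context: $SU(2)$ is the group of unit quaternions, $su(2)$ the pure quaternions $\mathrm{span}\{i,j,k\}$ identified with $\mathbb R^3$ via $i\mapsto e_1,j\mapsto e_2,k\mapsto e_3$ (so the Euclidean inner product and angles transfer). For a unit pure quaternion $X$, $\exp(sX)=\cos s+X\sin s$ (exponential in $\mathbb H$). $\varphi:SU(2)\to SO(3)$ is the double cover with $\varphi(\exp(v))=R(2v)$, $R(w)$ being rotation by angle $|w|$ about $w/|w|$. *)

From Stdlib Require Export Reals.
Open Scope R_scope.

(* Vectors of R^3 (identified with su(2) = span{i,j,k} via i,j,k -> e1,e2,e3). *)
Record vec3 := V3 { vx : R; vy : R; vz : R }.

Definition vdot (u v : vec3) : R := vx u * vx v + vy u * vy v + vz u * vz v.
Definition vcross (u v : vec3) : vec3 :=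
  V3 (vy u * vz v - vz u * vy v) (vz u * vx v - vx u * vz v) (vx u * vy v - vy u * vx v).
Definition vscale (a : R) (v : vec3) : vec3 := V3 (a * vx v) (a * vy v) (a * vz v).
Definition vadd (u v : vec3) : vec3 := V3 (vx u + vx v) (vy u + vy v) (vz u + vz v).
Definition vnorm (v : vec3) : R := sqrt (vdot v v).
Definition is_unit (v : vec3) : Prop := vdot v v = 1.

Record quat := Q { qre : R; qi : R; qj : R; qk : R }.

Definition qmul (p q : quat) : quat :=
  Q (qre p * qre q - qi p * qi q - qj p * qj q - qk p * qk q)
    (qre p * qi q + qi p * qre q + qj p * qk q - qk p * qj q)
    (qre p * qj q - qi p * qk q + qj p * qre q + qk p * qi q)
    (qre p * qk q + qi p * qj q - qj p * qi q + qk p * qre q).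
Definition qopp (p : quat) : quat := Q (- qre p) (- qi p) (- qj p) (- qk p).
Definition qconj (p : quat) : quat := Q (qre p) (- qi p) (- qj p) (- qk p).

Definition pure (v : vec3) : quat := Q 0 (vx v) (vy v) (vz v).
Definition vecpart (p : quat) : vec3 := V3 (qi p) (qj p) (qk p).

(* exp(s X) = cos s + X sin s for a unit pure quaternion X *)
Definition qexp (s : R) (X : vec3) : quat :=
  Q (cos s) (sin s * vx X) (sin s * vy X) (sin s * vz X).

(* rotation by angle theta about the unit axis u (Rodrigues formula) *)
Definition rot_axis_angle (u : vec3) (theta : R) (v : vec3) : vec3 :=
  vadd (vadd (vscale (cos theta) v) (vscale (sin theta) (vcross u v)))
       (vscale ((1 - cos theta) * vdot u v) u).

Definition Rw (w : vec3) (v : vec3) : vec3 :=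
  if Req_EM_T (vnorm w) 0 then v
  else rot_axis_angle (vscale (/ vnorm w) w) (vnorm w) v.

(* double cover phi : SU(2) -> SO(3), phi(q) v = q v q^{-1} = q v conj(q)
   (so that phi(exp v) = R(2v)) *)
Definition phi (q : quat) (v : vec3) : vec3 := vecpart (qmul (qmul q (pure v)) (qconj q)).

Definition is_rotation_by_pi (f : vec3 -> vec3) : Prop :=
  exists w : vec3, vnorm w = PI /\ forall v, f v = Rw w v.

(** Multiplying out [exp(s1 X) exp(s2 Y)] gives real part
    [cos s1 cos s2 - cos(alpha) sin s1 sin s2], which vanishes exactly when
    [cos(alpha) tan s1 tan s2 = 1].  A unit quaternion with zero real part is
    a pure unit quaternion [u]: it acts on [R^3] as the half-turn about [u], and
    it equals minus its own conjugate, which is the second claim of (a).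
    For (b), [exp((psi - pi/2) X) exp(-s2 Y) exp((psi + pi/2) X) = exp(s2 Y)]
    whenever [sin psi cos s2 = cos(alpha) cos psi sin s2]; splitting the outer
    exponentials with [exp((a + b) X) = exp(a X) exp(b X)] then gives the
    identity. *)

From Stdlib Require Import Reals Lra.
Open Scope R_scope.

Lemma eq_of_lin_comb (l r e1 e2 e3 k1 k2 k3 : R) :
  e1 = 0 -> e2 = 0 -> e3 = 0 -> l - r = k1 * e1 + k2 * e2 + k3 * e3 -> l = r.
Proof. intros -> -> -> H. lra. Qed.

Lemma qmulA (p q r : quat) : qmul (qmul p q) r = qmul p (qmul q r).
Proof. destruct p, q, r; unfold qmul; simpl; f_equal; ring. Qed.

Lemma qconjM (p q : quat) : qconj (qmul p q) = qmul (qconj q) (qconj p).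
Proof. destruct p, q; unfold qconj, qmul; simpl; f_equal; ring. Qed.

Lemma qopp_qconj_re0 (q : quat) : qre q = 0 -> qopp (qconj q) = q.
Proof.
destruct q as [r a b c]; simpl; intros ->.
unfold qopp, qconj; simpl; f_equal; ring.
Qed.

Definition qnorm2 (p : quat) : R :=
  qre p * qre p + qi p * qi p + qj p * qj p + qk p * qk p.

Lemma qnorm2M (p q : quat) : qnorm2 (qmul p q) = qnorm2 p * qnorm2 q.
Proof. destruct p, q; unfold qnorm2, qmul; simpl; ring. Qed.

Lemma qnorm2_qexp (s : R) (X : vec3) : is_unit X -> qnorm2 (qexp s X) = 1.
Proof.
intro hX.
transitivity (cos s * cos s + sin s * sin s * vdot X X).
- unfold qnorm2, qexp, vdot; simpl; ring.
- rewrite hX, Rmult_1_r, Rplus_comm. exact (sin2_cos2 s).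
Qed.

Lemma qexpN (s : R) (X : vec3) : qexp (- s) X = qconj (qexp s X).
Proof. unfold qexp, qconj; simpl; rewrite cos_neg, sin_neg; f_equal; ring. Qed.

Lemma qexpD (u v : R) (X : vec3) :
  is_unit X -> qexp (u + v) X = qmul (qexp u X) (qexp v X).
Proof.
intro hX. unfold qexp, qmul; simpl; rewrite cos_plus, sin_plus; f_equal; try ring.
transitivity (cos u * cos v - sin u * sin v * vdot X X).
- rewrite hX; ring.
- unfold vdot; ring.
Qed.

Lemma qre_qmul_qexp (s t : R) (X Y : vec3) :
  qre (qmul (qexp s X) (qexp t Y)) = cos s * cos t - vdot X Y * sin s * sin t.
Proof. unfold qmul, qexp, vdot; simpl; ring. Qed.

Lemma phi_pure (u v : vec3) :
  phi (pure u) v = vadd (vscale (- vdot u u) v) (vscale (2 * vdot u v) u).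
Proof.
destruct u, v; unfold phi, vecpart, qmul, pure, qconj, vadd, vscale, vdot; simpl.
f_equal; ring.
Qed.

Lemma vnorm_scale_unit (a : R) (u : vec3) :
  is_unit u -> 0 <= a -> vnorm (vscale a u) = a.
Proof.
intros hu ha. unfold vnorm.
replace (vdot (vscale a u) (vscale a u)) with (a * a * vdot u u)
  by (unfold vdot, vscale; simpl; ring).
rewrite hu, Rmult_1_r. exact (sqrt_square a ha).
Qed.

Lemma Rw_scale_unit (a : R) (u v : vec3) :
  is_unit u -> 0 < a -> Rw (vscale a u) v = rot_axis_angle u a v.
Proof.
intros hu ha. unfold Rw. rewrite (vnorm_scale_unit a u hu) by lra.
destruct (Req_EM_T a 0) as [e | _]; [lra |].
f_equal. destruct u; unfold vscale; simpl; f_equal; field; lra.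
Qed.

Lemma phi_pure_unit (u v : vec3) :
  is_unit u -> phi (pure u) v = Rw (vscale PI u) v.
Proof.
intro hu. pose proof PI_RGT_0.
rewrite Rw_scale_unit, phi_pure, hu by assumption.
unfold rot_axis_angle; rewrite cos_PI, sin_PI.
destruct u, v; unfold vadd, vscale, vdot; simpl; f_equal; ring.
Qed.

Lemma is_rotation_by_pi_phi (q : quat) :
  qre q = 0 -> qnorm2 q = 1 -> is_rotation_by_pi (phi q).
Proof.
destruct q as [r a b c]; simpl; intros -> hn.
assert (hu : is_unit (V3 a b c)) by (unfold is_unit, vdot, qnorm2 in *; simpl in *; lra).
change (is_rotation_by_pi (phi (pure (V3 a b c)))).
exists (vscale PI (V3 a b c)); split.
- apply vnorm_scale_unit; [exact hu | pose proof PI_RGT_0; lra].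
- intro v; exact (phi_pure_unit _ v hu).
Qed.

Lemma cos_sub_eq0_of_tan (c s1 s2 : R) :
  cos s1 <> 0 -> cos s2 <> 0 -> c * tan s1 * tan s2 = 1 ->
  cos s1 * cos s2 - c * sin s1 * sin s2 = 0.
Proof.
intros h1 h2 h. unfold tan in h.
replace (c * sin s1 * sin s2)
  with (c * (sin s1 / cos s1) * (sin s2 / cos s2) * (cos s1 * cos s2)) by (field; auto).
rewrite h; ring.
Qed.

Lemma sin_cos_of_tan (c s psi : R) :
  cos psi <> 0 -> cos s <> 0 -> tan psi = c * tan s ->
  sin psi * cos s = c * cos psi * sin s.
Proof.
intros hpsi hs h. unfold tan in h.
replace (sin psi) with (sin psi / cos psi * cos psi) by (field; auto).
rewrite h; field; auto.
Qed.

(* Each component of the difference of the two sides is a polynomial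
   combination of [|X|^2 - 1], [sin^2 psi + cos^2 psi - 1] and the hypothesis
   on [psi]; the cofactors are those passed to [eq_of_lin_comb]. *)
Lemma qexp_sandwich (X Y : vec3) (s psi : R) :
  is_unit X -> sin psi * cos s = vdot X Y * cos psi * sin s ->
  qmul (qmul (qexp (psi - PI / 2) X) (qexp (- s) Y)) (qexp (psi + PI / 2) X)
  = qexp s Y.
Proof.
intros hX hpsi.
unfold is_unit, vdot in hX, hpsi.
destruct X as [x1 x2 x3], Y as [y1 y2 y3]; simpl in *.
assert (g1 : x1 * x1 + x2 * x2 + x3 * x3 - 1 = 0) by lra.
assert (g2 : sin psi * sin psi + cos psi * cos psi - 1 = 0)
  by (pose proof (sin2_cos2 psi); unfold Rsqr in *; lra).
assert (g3 : sin psi * cos s - (x1 * y1 + x2 * y2 + x3 * y3) * cos psi * sin s = 0)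
  by lra.
unfold qexp, qmul; simpl.
rewrite cos_minus, sin_minus, cos_plus, sin_plus, cos_PI2, sin_PI2, cos_neg, sin_neg.
set (a := sin psi) in *; set (b := cos psi) in *; set (C := cos s) in *; set (S := sin s) in *.
f_equal.
- apply (eq_of_lin_comb _ _ _ _ _ (b * b * C) C (-2 * a) g1 g2 g3); ring.
- apply (eq_of_lin_comb _ _ _ _ _ (b * b * S * y1) (S * y1) (2 * x1 * b) g1 g2 g3); ring.
- apply (eq_of_lin_comb _ _ _ _ _ (b * b * S * y2) (S * y2) (2 * x2 * b) g1 g2 g3); ring.
- apply (eq_of_lin_comb _ _ _ _ _ (b * b * S * y3) (S * y3) (2 * x3 * b) g1 g2 g3); ring.
Qed.

Theorem proposition4p2 (X Y : vec3) (alpha : R)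
  (hX : is_unit X) (hY : is_unit Y)
  (halpha : 0 < alpha < PI) (hangle : vdot X Y = cos alpha) :
  (forall s1 s2 : R,
     cos s1 <> 0 -> cos s2 <> 0 ->
     cos alpha * tan s1 * tan s2 = 1 ->
     is_rotation_by_pi (phi (qmul (qexp s1 X) (qexp s2 Y))) /\
     qmul (qexp s1 X) (qexp s2 Y) = qopp (qmul (qexp (- s2) Y) (qexp (- s1) X)))
  /\
  (forall s1 s2 s3 psi : R,
     cos s2 <> 0 ->
     - (PI / 2) < psi <= PI / 2 ->
     cos psi <> 0 ->
     tan psi = cos alpha * tan s2 ->
     qmul (qmul (qexp s1 X) (qexp s2 Y)) (qexp s3 X)
     = qmul (qmul (qexp (s1 + psi - PI / 2) X) (qexp (- s2) Y)) (qexp (s3 + psi + PI / 2) X)).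
Proof.
split.
- intros s1 s2 c1 c2 htan.
  assert (hre : qre (qmul (qexp s1 X) (qexp s2 Y)) = 0).
  { rewrite qre_qmul_qexp, hangle. exact (cos_sub_eq0_of_tan _ _ _ c1 c2 htan). }
  split.
  + apply is_rotation_by_pi_phi; [exact hre |].
    rewrite qnorm2M, !qnorm2_qexp by assumption; ring.
  + rewrite !qexpN, <- qconjM, qopp_qconj_re0 by exact hre. reflexivity.
- intros s1 s2 s3 psi c2 _ cpsi htan.
  rewrite <- hangle in htan.
  pose proof (sin_cos_of_tan _ _ _ cpsi c2 htan) as hpsi.
  replace (s1 + psi - PI / 2) with (s1 + (psi - PI / 2)) by ring.
  replace (s3 + psi + PI / 2) with ((psi + PI / 2) + s3) by ring.
  rewrite (qexpD s1), (qexpD (psi + PI / 2)) by exact hX.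
  rewrite <- (qexp_sandwich X Y s2 psi hX hpsi), !qmulA.
  reflexivity.
Qed.
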